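(* Let $\mathcal{D}_n$ be a minimal DFA of a bifix-free language with state set $Q=\{0,\dots,n-1\}$ (initial state $0$, final state $n-2$, empty state $n-1$) and transition semigroup $T(n)$. Let $t,\hat{t}\in T(n)$ and $s\in\mathbf{W}^{\ge 6}_{\mathrm{bf}}(n)$. Suppose that: (1) all states $q\in Q_M$ with $qt\ne qs$ belong to $C$, where $C$ is either an orbit of $s$ or the tree of a state in $s$; (2) all states $q\in Q_M$ with $q\hat{t}\ne qs$ belong to $\hat{C}$, where $\hat{C}$ is either an orbit of $s$ or the tree of a state in $s$; (3) for some $i,j\ge 0$ the transformation $s^it^j$ focuses a colliding pair both of whose states lie in $C$. Then $C\subseteq\hat{C}$ or $\hat{C}\subseteq C$. In particular, if $C$ and $\hat{C}$ are both orbits, or both trees rooted in a state mapped by $s$ to $n-1$, then $C=\hat{C}$.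
   Context: A language is bifix-free if no word of it is a proper prefix or a proper suffix of another word of it. Transformations of $Q$ act on the right, $q(st)=(qs)t$; $T(n)$ is the semigroup of transformations induced by nonempty words. $Q_M=\{1,\dots,n-3\}$. An unordered pair $\{p,q\}$ of distinct states of $Q_M$ is colliding if there is $u\in T(n)$ with $0u=p$ and $ru=q$ for some $r\in Q_M$. A transformation $u$ focuses a pair $\{p,q\}$ if $pu=qu=r$ for a single state $r\in Q_M\cup\{n-2\}$. The underlying digraph of a transformation $s$ has vertex set $Q$ and edges $(q,qs)$; the orbit of $q$ in $s$ is its connected component, $\{p\in Q\mid ps^i=qs^j$ for some $i,j\ge0\}$; a cycle is a cycle of length at least 2 in this digraph; if $q$ does not lie in a cycle, the tree of $q$ is the underlying digraph restricted to the states $p$ having a path from $p$ to $q$. Let $\mathbf{B}_{\mathrm{bf}}(n)$ be the set of all transformations $t$ of $Q$ with $0\notin Qt$, $(n-1)t=n-1$, $(n-2)t=n-1$, and for all $j\ge1$, either $0t^j=n-1$ or $0t^j\ne qt^j$ for all $0<q<n-1$; and $\mathbf{W}^{\ge 6}_{\mathrm{bf}}(n)=\{t\in\mathbf{B}_{\mathrm{bf}}(n)\mid 0t\in\{n-2,n-1\}$, or $0t\in Q_M$ and $qt\in\{n-2,n-1\}$ for all $q\in Q_M\}$. *)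

(* States Q = {0,...,n-1} are 'I_n; transformations are
   functions 'I_n -> 'I_n acting on the right: q(st) = t (s q). *)
From mathcomp Require Import all_boot.
Set Implicit Arguments. Unset Strict Implicit. Unset Printing Implicit Defensive.

Section Defs.
Variables (n : nat) (A : finType) (delta : 'I_n -> A -> 'I_n).

Definition dstar (q : 'I_n) (w : seq A) : 'I_n := foldl delta q w.

Definition accepts (q : 'I_n) (w : seq A) : bool := val (dstar q w) == n - 2.

Definition bifix_free (L : seq A -> Prop) : Prop :=
  forall u v x : seq A, L u -> L v -> x != [::] ->
    v <> u ++ x /\ v <> x ++ u.

Definition bifix_min_dfa (q0 : 'I_n) : Prop :=
  [/\ val q0 = 0,
      (forall q : 'I_n, exists w, dstar q0 w = q),
      (forall p q : 'I_n, (forall w, accepts p w = accepts q w) -> p = q),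
      (forall q : 'I_n, val q = n - 1 -> forall w, accepts q w = false)
    & bifix_free (fun w => accepts q0 w)].

Definition inT (t : 'I_n -> 'I_n) : Prop :=
  exists w : seq A, w != [::] /\ forall q, t q = dstar q w.

Definition inQM (q : 'I_n) : bool := (1 <= val q) && (val q <= n - 3).

Definition colliding (p q : 'I_n) : Prop :=
  [/\ p != q, inQM p, inQM q &
    exists u, inT u /\ exists z r : 'I_n, [/\ val z = 0, inQM r &
      (u z = p /\ u r = q) \/ (u z = q /\ u r = p)]].

End Defs.

Section Trans.
Variable n : nat.

Definition focuses (u : 'I_n -> 'I_n) (p q : 'I_n) : Prop :=
  exists r : 'I_n, (inQM r \/ val r = n - 2) /\ u p = r /\ u q = r.

Definition inB (t : 'I_n -> 'I_n) : Prop :=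
  [/\ (forall q, val (t q) <> 0),
      (forall q, val q = n - 1 -> val (t q) = n - 1),
      (forall q, val q = n - 2 -> val (t q) = n - 1) &
      (forall j, 1 <= j -> forall z, val z = 0 ->
         val (iter j t z) = n - 1 \/
         forall q : 'I_n, 0 < val q < n - 1 -> iter j t z <> iter j t q)].

Definition inW (t : 'I_n -> 'I_n) : Prop :=
  inB t /\ forall z : 'I_n, val z = 0 ->
    (val (t z) = n - 2 \/ val (t z) = n - 1) \/
    (inQM (t z) /\ forall q, inQM q -> val (t q) = n - 2 \/ val (t q) = n - 1).

Definition orbit (s : 'I_n -> 'I_n) (q : 'I_n) (p : 'I_n) : Prop :=
  exists i j, iter i s p = iter j s q.

Definition in_cycle (s : 'I_n -> 'I_n) (q : 'I_n) : Prop :=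
  (exists k, 0 < k /\ iter k s q = q) /\ s q <> q.

Definition tree (s : 'I_n -> 'I_n) (q : 'I_n) (p : 'I_n) : Prop :=
  exists i, iter i s p = q.

Definition same_set (C D : 'I_n -> Prop) : Prop := forall x, C x <-> D x.

Definition is_orbit (s : 'I_n -> 'I_n) (C : 'I_n -> Prop) : Prop :=
  exists q, same_set C (orbit s q).

Definition is_tree (s : 'I_n -> 'I_n) (C : 'I_n -> Prop) : Prop :=
  exists q, ~ in_cycle s q /\ same_set C (tree s q).

Definition is_sink_tree (s : 'I_n -> 'I_n) (C : 'I_n -> Prop) : Prop :=
  exists q, [/\ val q <> n - 1, val (s q) = n - 1, ~ in_cycle s q &
                same_set C (tree s q)].

End Trans.

From mathcomp Require Import all_boot zify.
From Stdlib Require Import Classical.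
Set Implicit Arguments. Unset Strict Implicit.

(* If the pair p, q collides, some u in T(n) sends 0 and some r in Q_M to p and q,
   so a word focusing p and q would send 0 and r to one state of Q_M or to n-2;
   suffix-freeness forbids this.  Hence s^i t^j cannot be replaced by the word
   th^i t^j on p and q, i.e. the s-path of p or of q hits a state where th and s
   differ.  That state is in Ch, and Ch is closed under s-predecessors, so Ch
   contains p or q and thus meets C.  Two orbits or trees of s that meet are
   nested. *)

Lemma iter_eq_along (T : Type) (f g : T -> T) (x : T) :
  (forall k, g (iter k f x) = f (iter k f x)) -> forall k, iter k g x = iter k f x.
Proof. by move=> eq_gf; elim=> // k IHk; rewrite !iterS IHk eq_gf. Qed.

Section OrbitsAndTrees.
Variables (n : nat) (s : 'I_n -> 'I_n).

Lemma orbit_refl q : orbit s q q.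
Proof. by exists 0, 0. Qed.

Lemma orbit_sym p q : orbit s q p -> orbit s p q.
Proof. by case=> i [j e]; exists j, i. Qed.

Lemma orbit_trans q p x : orbit s q p -> orbit s p x -> orbit s q x.
Proof.
case=> i [j e_pq] [k [l e_xp]]; exists (i + k), (l + j).
by rewrite iterD e_xp -iterD addnC iterD e_pq -iterD.
Qed.

Lemma orbit_iter q x m : orbit s q (iter m s x) -> orbit s q x.
Proof. by case=> i [j e]; exists (i + m), j; rewrite iterD. Qed.

Lemma tree_refl q : tree s q q.
Proof. by exists 0. Qed.

Lemma tree_trans q p x : tree s q p -> tree s p x -> tree s q x.
Proof. by case=> i e_pq [k e_xp]; exists (i + k); rewrite iterD e_xp. Qed.

Lemma tree_iter q x m : tree s q (iter m s x) -> tree s q x.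
Proof. by case=> i e; exists (i + m); rewrite iterD. Qed.

Lemma tree_orbit q p : tree s q p -> orbit s q p.
Proof. by case=> i e; exists i, 0. Qed.

Lemma tree_total a b x : tree s a x -> tree s b x -> tree s b a \/ tree s a b.
Proof.
case=> i e_a [k e_b]; case: (leqP i k) => [le_ik | /ltnW le_ki].
- by left; exists (k - i); rewrite -e_a -iterD subnK.
- by right; exists (i - k); rewrite -e_b -iterD subnK.
Qed.

Definition orbit_or_tree (C : 'I_n -> Prop) := is_orbit s C \/ is_tree s C.

Lemma orbit_or_tree_iter C x m : orbit_or_tree C -> C (iter m s x) -> C x.
Proof.
case=> [[q eC] | [q [_ eC]]] /eC => [/orbit_iter | /tree_iter] => ?; exact/eC.
Qed.

Lemma orbit_or_tree_sub_orbit C a x :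
  orbit_or_tree C -> C x -> orbit s a x -> forall y, C y -> orbit s a y.
Proof.
have sub_orbit b: orbit s b x -> orbit s a x -> forall y, orbit s b y -> orbit s a y.
  by move=> bx ax y /(orbit_trans (orbit_trans ax (orbit_sym bx))).
case=> [[b eC] | [b [_ eC]]] /eC Cx ax y /eC.
- exact: sub_orbit Cx ax y.
- by move/tree_orbit; apply: sub_orbit (tree_orbit Cx) ax y.
Qed.

Lemma orbit_or_tree_nested C D x : orbit_or_tree C -> orbit_or_tree D -> C x -> D x ->
  (forall y, C y -> D y) \/ (forall y, D y -> C y).
Proof.
move=> HC HD Cx Dx.
case: (HC) => [[a eC] | [a [_ eC]]].
  by right=> y /(orbit_or_tree_sub_orbit HD Dx (iffLR (eC x) Cx)) /eC.
case: (HD) => [[b eD] | [b [_ eD]]].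
  by left=> y /(orbit_or_tree_sub_orbit HC Cx (iffLR (eD x) Dx)) /eD.
case: (tree_total (iffLR (eC x) Cx) (iffLR (eD x) Dx)) => [ba | ab].
- by left=> y /eC /(tree_trans ba) /eD.
- by right=> y /eD /(tree_trans ab) /eC.
Qed.

Lemma is_orbit_nested_eq C D : is_orbit s C -> is_orbit s D ->
  (forall y, C y -> D y) \/ (forall y, D y -> C y) -> same_set C D.
Proof.
move=> [a eC] [b eD] nested.
have ab : orbit s a b.
  case: nested => [CD | DC].
  - exact/orbit_sym/eD/CD/eC/orbit_refl.
  - exact/eC/DC/eD/orbit_refl.
move=> x; rewrite eC eD; split; first exact: orbit_trans (orbit_sym ab).
exact: orbit_trans ab.
Qed.

Hypothesis s_empty : forall q, val q = n - 1 -> val (s q) = n - 1.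

Lemma iter_empty k q : val q = n - 1 -> val (iter k s q) = n - 1.
Proof. by move=> hq; elim: k => //= k; apply: s_empty. Qed.

Lemma sink_tree_root a b : val b <> n - 1 -> val (s a) = n - 1 -> tree s b a -> a = b.
Proof.
move=> hb hsa [[|k] //]; rewrite iterSr => e_ab.
by have := iter_empty k hsa; rewrite e_ab.
Qed.

Lemma is_sink_tree_nested_eq C D : is_sink_tree s C -> is_sink_tree s D ->
  (forall y, C y -> D y) \/ (forall y, D y -> C y) -> same_set C D.
Proof.
move=> [a [ha hsa _ eC]] [b [hb hsb _ eD]] nested.
have ab : a = b.
  case: nested => [CD | DC].
  - exact/(sink_tree_root hb hsa)/eD/CD/eC/tree_refl.
  - exact/esym/(sink_tree_root ha hsb)/eC/DC/eD/tree_refl.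
by move=> x; rewrite eC eD ab.
Qed.

End OrbitsAndTrees.

Section MinimalBifixFreeDFA.
Variables (n : nat) (A : finType) (delta : 'I_n -> A -> 'I_n) (q0 : 'I_n).
Hypothesis Hdfa : bifix_min_dfa delta q0.

Lemma dstar_cat q u v : dstar delta q (u ++ v) = dstar delta (dstar delta q u) v.
Proof. by rewrite /dstar foldl_cat. Qed.

Lemma dead_state_empty p : (forall v, accepts delta p v = false) -> val p = n - 1.
Proof.
have lt_n1 : n - 1 < n by have := ltn_ord p; lia.
case: Hdfa => _ _ Hmin Hempty _ dead_p.
suff -> : p = Ordinal lt_n1 by [].
by apply: Hmin => v; rewrite dead_p Hempty.
Qed.

Lemma dstar_empty e w : val e = n - 1 -> dstar delta e w = e.
Proof.
move=> he; apply: val_inj; rewrite he; apply: dead_state_empty => v.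
by rewrite /accepts -dstar_cat; case: Hdfa => _ _ _ Hempty _; apply: Hempty.
Qed.

(* prefix-freeness *)
Lemma dstar_final f w : val f = n - 2 -> w != [::] -> val (dstar delta f w) = n - 1.
Proof.
case: (Hdfa) => _ Hreach _ _ Hbf hf w_ne0; apply: dead_state_empty => v.
apply/negP => acc; have [y hy] := Hreach f.
have wv_ne0 : w ++ v != [::].
  by rewrite -size_eq0 size_cat addn_eq0 size_eq0 negb_and w_ne0.
have acc_y : accepts delta q0 y by rewrite /accepts hy hf.
have acc_ywv : accepts delta q0 (y ++ (w ++ v)) by rewrite /accepts !dstar_cat hy.
by case: (Hbf _ _ _ acc_y acc_ywv wv_ne0).
Qed.

(* suffix-freeness, applied to a nonempty word leading from 0 to r *)
Lemma dstar_collide r w : inQM r -> dstar delta q0 w = dstar delta r w ->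
  val (dstar delta r w) = n - 1.
Proof.
case: (Hdfa) => hq0 Hreach _ _ Hbf hr e_w; apply: dead_state_empty => v.
apply/negP => acc; have [y hy] := Hreach r.
have y_ne0 : y != [::] by case: y hy => // e; move: hr; rewrite -e /inQM /= hq0.
have acc_wv : accepts delta q0 (w ++ v) by rewrite /accepts dstar_cat e_w.
have acc_ywv : accepts delta q0 (y ++ (w ++ v)) by rewrite /accepts !dstar_cat hy.
by case: (Hbf _ _ _ acc_wv acc_ywv y_ne0).
Qed.

Definition word_map (g : 'I_n -> 'I_n) := exists w, forall q, g q = dstar delta q w.

Lemma inT_word_map t : inT delta t -> word_map t.
Proof. by case=> w [_ tw]; exists w. Qed.

Lemma word_map_comp g h : word_map g -> word_map h -> word_map (h \o g).
Proof. by case=> u gu [v hv]; exists (u ++ v) => q; rewrite /= gu hv dstar_cat. Qed.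

Lemma word_map_iter g k : word_map g -> word_map (iter k g).
Proof.
move=> wg; elim: k => [|k IHk]; first by exists [::].
by have [w hw] := word_map_comp IHk wg; exists w => q; rewrite iterS -hw.
Qed.

Lemma colliding_unfocused p q g :
  colliding delta p q -> word_map g -> ~ focuses g p q.
Proof.
case=> _ _ _ [u [Tu [z [r [hz hr e_zr]]]]] wg [r' [hr' [gp gq]]].
have [w hw] := word_map_comp (inT_word_map Tu) wg.
have z_q0 : z = q0 by apply: val_inj; rewrite hz; case: Hdfa.
have e_w : dstar delta q0 w = dstar delta r w /\ dstar delta r w = r'.
  by rewrite -!hw -z_q0 /=; case: e_zr => -[-> ->]; rewrite gp gq.
have [e0r er] := e_w; have := dstar_collide hr e0r; rewrite er.
by move: hr hr'; rewrite /inQM; lia.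
Qed.

Lemma inT_final t f : inT delta t -> val f = n - 2 -> val (t f) = n - 1.
Proof. by case=> w [w_ne0 tw] hf; rewrite tw dstar_final. Qed.

Lemma inT_empty t e : inT delta t -> val e = n - 1 -> t e = e.
Proof. by case=> w [_ tw] he; rewrite tw dstar_empty. Qed.

End MinimalBifixFreeDFA.

Lemma state_cases n (q : 'I_n) :
  [\/ val q = 0, inQM q, val q = n - 2 | val q = n - 1].
Proof.
rewrite /inQM /=; have := ltn_ord q.
case: (posnP q) => [? | q_gt0] lt_qn; first by constructor 1.
case: (leqP q (n - 3)) => hq; first by constructor 2; apply/andP.
have [? | ?] := eqVneq (q : nat) (n - 1); first by constructor 4.
by constructor 3; lia.
Qed.

Section Agreement.
Variables (n : nat) (A : finType) (delta : 'I_n -> A -> 'I_n) (q0 : 'I_n).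
Hypothesis Hdfa : bifix_min_dfa delta q0.
Variables (th s : 'I_n -> 'I_n) (Ch : 'I_n -> Prop).
Hypotheses (Hth : inT delta th) (Hs : inB s) (HCh : orbit_or_tree s Ch).
Hypothesis th_s_Ch : forall q, inQM q -> th q <> s q -> Ch q.

Lemma agree_outside y : val y <> 0 -> ~ Ch y -> th y = s y.
Proof.
case: Hs => _ s_empty s_final _ y_ne0 Chy.
case: (state_cases y) => hy //.
- by case: (eqVneq (th y) (s y)) => // /eqP /(th_s_Ch hy).
- by apply: val_inj; rewrite (inT_final Hdfa Hth hy) s_final.
- by apply: val_inj; rewrite (inT_empty Hdfa Hth hy) s_empty.
Qed.

Lemma iter_agree_outside x : inQM x -> ~ Ch x -> forall k, iter k th x = iter k s x.
Proof.
move=> hx Chx; apply: iter_eq_along => k; apply: agree_outside.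
- case: k => [|k]; last by case: Hs => s_ne0 _ _ _; apply: s_ne0.
  by move=> x0; move: hx; rewrite /inQM x0.
- by move/(orbit_or_tree_iter HCh).
Qed.

Lemma colliding_meets t i j p q : inT delta t -> colliding delta p q ->
  focuses (fun x => iter j t (iter i s x)) p q -> Ch p \/ Ch q.
Proof.
move=> Ht pq [r [hr [fp fq]]].
case: (classic (Ch p)) => [|Chp]; first by left.
case: (classic (Ch q)) => [|Chq]; first by right.
have word_g : word_map delta (iter j t \o iter i th).
  exact: word_map_comp (word_map_iter i (inT_word_map Hth))
                       (word_map_iter j (inT_word_map Ht)).
case: (colliding_unfocused Hdfa pq word_g).
case: pq => _ hp hq _.
by exists r; rewrite /= !iter_agree_outside.
Qed.

End Agreement.

Theorem mainTheorem11 (n : nat) (A : finType) (delta : 'I_n -> A -> 'I_n)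
  (q0 : 'I_n) (Hdfa : bifix_min_dfa delta q0)
  (t th s : 'I_n -> 'I_n)
  (Ht : inT delta t) (Hth : inT delta th) (Hs : inW s)
  (C Ch : 'I_n -> Prop)
  (HC : is_orbit s C \/ is_tree s C)
  (HCh : is_orbit s Ch \/ is_tree s Ch)
  (H1 : forall q, inQM q -> t q <> s q -> C q)
  (H2 : forall q, inQM q -> th q <> s q -> Ch q)
  (H3 : exists i j : nat, exists p q : 'I_n,
          [/\ colliding delta p q, C p, C q &
              focuses (fun x => iter j t (iter i s x)) p q]) :
  ((forall x, C x -> Ch x) \/ (forall x, Ch x -> C x)) /\
  ((is_orbit s C /\ is_orbit s Ch) \/ (is_sink_tree s C /\ is_sink_tree s Ch) ->
     same_set C Ch).
Proof.
have [Bs _] := Hs; have [_ s_empty _ _] := Bs.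
have [i [j [p [q [pq Cp Cq focus]]]]] := H3.
have nested : (forall x, C x -> Ch x) \/ (forall x, Ch x -> C x).
  case: (colliding_meets Hdfa Hth Bs HCh H2 Ht pq focus) => [Chp | Chq].
  - exact: orbit_or_tree_nested HC HCh Cp Chp.
  - exact: orbit_or_tree_nested HC HCh Cq Chq.
split=> // -[[oC oCh] | [tC tCh]].
- exact: is_orbit_nested_eq oC oCh nested.
- exact (is_sink_tree_nested_eq s_empty tC tCh nested).
Qed.
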